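(* Let $G$ be a simple graph with $n$ vertices and independence number $\alpha(G)$. Then the multiplicity of $1$ as a root of $P(\mathcal{H}_{\bullet G},\lambda)$ equals $n-\alpha(G)$.
   Context: A hypergraph $\mathcal{H}=(\mathcal{V},\mathcal{E})$ consists of a finite vertex set $\mathcal{V}$ and a set $\mathcal{E}$ of subsets of $\mathcal{V}$, each of size at least $1$, called edges. For a positive integer $\lambda$, a weak proper $\lambda$-colouring of $\mathcal{H}$ is a map $\phi:\mathcal{V}\to\{1,\dots,\lambda\}$ such that $|\{\phi(v):v\in e\}|>1$ for every $e\in\mathcal{E}$. $P(\mathcal{H},\lambda)$ denotes the number of weak proper $\lambda$-colourings of $\mathcal{H}$; it is a polynomial in $\lambda$ of degree $|\mathcal{V}|$. For a simple graph $G=(V,E)$, $\mathcal{H}_{\bullet G}$ is the hypergraph with vertex set $V\cup\{w\}$, where $w\notin V$ is a new vertex, and edge set $\{\{u,v,w\}: uv\in E\}$. *)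

From HB Require Import structures.
From mathcomp Require Import all_boot all_order all_algebra.
Set Implicit Arguments. Unset Strict Implicit. Unset Printing Implicit Defensive.
Import Order.TTheory GRing.Theory Num.Theory.

Definition weak_proper (V : finType) (E : {set {set V}}) (k : nat)
  (phi : {ffun V -> 'I_k}) : bool :=
  [forall e in E, 1 < #|[set phi v | v in e]|]%N.

Definition num_weak_colourings (V : finType) (E : {set {set V}}) (k : nat) : nat :=
  #|[set phi : {ffun V -> 'I_k} | weak_proper E phi]|.

Definition simple_graph (T : finType) (g : rel T) : Prop :=
  symmetric g /\ irreflexive g.

(* H_{\bullet G}: vertex set option T (None is the new vertex w),
   edges {u, v, w} for each edge uv of G. *)
Definition Hbullet_edges (T : finType) (g : rel T) : {set {set option T}} :=
  [set [set Some u.1; Some u.2; None] | u in [set u : T * T | g u.1 u.2]].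

Definition independent (T : finType) (g : rel T) (S : {set T}) : bool :=
  [forall u in S, forall v in S, ~~ g u v].

Definition independence_number (T : finType) (g : rel T) : nat :=
  \max_(S : {set T} | independent g S) #|S|.

(* p is the chromatic polynomial of (V,E): it agrees with P(H, k) at every
   positive integer k (this determines p uniquely). *)
Definition is_chrom_poly (V : finType) (E : {set {set V}}) (p : {poly rat}) : Prop :=
  forall k : nat, (0 < k)%N -> (p.[k%:R] = (num_weak_colourings E k)%:R)%R.

From HB Require Import structures.
From mathcomp Require Import all_boot all_order all_algebra.
Import Order.TTheory GRing.Theory Num.Theory.
Set Implicit Arguments. Unset Strict Implicit.

(* A colouring phi of H_{.G} is weakly proper iff the vertices of G sharing the
   colour of the apex w form an independent set S.  Fixing the colour of w and
   S, the other vertices take any of the remaining colours, so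
     P(H_{.G}, x) = x * \sum_(S independent) (x - 1) ^ (n - |S|).
   Every summand is divisible by (x - 1) ^ (n - alpha), and after dividing out
   the value at 1 is the number of maximum independent sets, which is positive. *)

Lemma card_set3_gt1 (U : finType) (x y z : U) :
  (1 < #|[set x; y; z]|)%N = ~~ ((x == z) && (y == z)).
Proof.
have [-> /=|xz] := eqVneq x z.
  have [-> /=|yz] := eqVneq y z; first by rewrite !setUid cards1.
  by apply/card_gt1P; exists y, z; rewrite !inE !eqxx yz orbT.
by apply/card_gt1P; exists x, z; rewrite !inE !eqxx xz !orbT.
Qed.

Lemma big_option (R : Type) (idx : R) (op : Monoid.com_law idx)
    (T : finType) (F : option T -> R) :
  \big[op/idx]_(x : option T) F x = op (F None) (\big[op/idx]_(v : T) F (Some v)).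
Proof.
rewrite (bigD1 None) //=; congr (op _ _).
rewrite (reindex_omap Some id) /=; last by case.
by apply: eq_bigl => v; rewrite eqxx.
Qed.

Definition apex_class (T : finType) (K : eqType) (phi : option T -> K) : {set T} :=
  [set v | phi (Some v) == phi None].

Lemma weak_proper_HbulletE (T : finType) (g : rel T) k (phi : {ffun option T -> 'I_k}) :
  weak_proper (Hbullet_edges g) phi = independent g (apex_class phi).
Proof.
have edge_colours u v : [set phi x | x in [set Some u; Some v; None]] =
    [set phi (Some u); phi (Some v); phi None].
  by rewrite !imsetU !imset_set1.
apply/forall_inP/forall_inP.
- move=> proper u; rewrite inE => Hu; apply/forall_inP => v; rewrite inE => Hv.
  apply/negP => guv.
  have /proper : [set Some u; Some v; None] \in Hbullet_edges g.
    by apply/imsetP; exists (u, v); rewrite ?inE.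
  by rewrite edge_colours card_set3_gt1 Hu Hv.
- move=> indep e /imsetP [[u v]]; rewrite inE /= => guv ->.
  rewrite edge_colours card_set3_gt1; apply/negP => /andP [Hu Hv].
  have := indep u; rewrite inE Hu => /(_ isT) /forall_inP /(_ v).
  by rewrite inE Hv guv => /(_ isT).
Qed.

Lemma card_apex_fibre (T K : finType) (c : K) (S : {set T}) :
  #|[set phi : {ffun option T -> K} | (phi None == c) && (apex_class phi == S)]| =
  (#|K|.-1 ^ (#|T| - #|S|))%N.
Proof.
pose F x : pred K :=
  if x is Some v then (if v \in S then pred1 c else predC1 c) else pred1 c.
have -> : #|[set phi : {ffun option T -> K} | (phi None == c) && (apex_class phi == S)]|
    = #|family F|.
  apply: eq_card => phi; rewrite !inE; apply/andP/familyP.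
  - move=> [/eqP phiw /eqP defS]; subst S => -[v|]; rewrite /F !inE phiw //.
    by case: eqP => [->|/eqP]; rewrite !inE ?eqxx.
  - move=> phiF; have /eqP phiw := phiF None; split; first exact/eqP.
    apply/eqP/setP => v; rewrite inE phiw; have := phiF (Some v).
    by rewrite /F; case: (v \in S); rewrite !inE // => /negbTE.
rewrite card_family foldrE big_image big_option /= card1 mul1n.
rewrite (eq_bigr (fun v => if v \in ~: S then #|K|.-1 else 1%N)); last first.
  by move=> v _; rewrite inE; case: (v \in S); rewrite /= ?card1 ?cardC1.
by rewrite -big_mkcond prod_nat_const cardsCs setCK.
Qed.

Lemma num_weak_colourings_Hbullet (T : finType) (g : rel T) k :
  num_weak_colourings (Hbullet_edges g) k =
  (k * \sum_(S : {set T} | independent g S) k.-1 ^ (#|T| - #|S|))%N.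
Proof.
rewrite /num_weak_colourings -sum1_card.
rewrite (partition_big (fun phi : {ffun option T -> 'I_k} => (phi None, apex_class phi))
                       (fun j : 'I_k * {set T} => independent g j.2)) => [|phi]; last first.
  by rewrite inE weak_proper_HbulletE.
rewrite -[k in (k * _)%N]card_ord -sum_nat_const pair_big /=.
apply: eq_big => [[c S] //|[c S] /= indS].
have := card_apex_fibre c S; rewrite card_ord sum1_card => <-.
apply: eq_card => phi; rewrite unfold_in /= !inE xpair_eqE weak_proper_HbulletE.
by case: (apex_class phi =P S) => [->|]; rewrite ?indS ?andbF.
Qed.

Lemma independent_set0 (T : finType) (g : rel T) : independent g set0.
Proof. by apply/forall_inP => u; rewrite inE. Qed.

Lemma card_le_independence_number (T : finType) (g : rel T) (S : {set T}) :
  independent g S -> (#|S| <= independence_number g)%N.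
Proof. exact: leq_bigmax_cond. Qed.

Lemma independence_number_le_card (T : finType) (g : rel T) :
  (independence_number g <= #|T|)%N.
Proof. by apply/bigmax_leqP => S _; apply: max_card. Qed.

Lemma independence_number_attained (T : finType) (g : rel T) :
  exists2 S, independent g S & #|S| = independence_number g.
Proof.
have [|S indS maxS] := @eq_bigmax_cond _ (independent g) (fun S => #|S|).
  by apply/card_gt0P; exists set0; apply: independent_set0.
by exists S => //; apply/esym; exact: maxS.
Qed.

Local Open Scope ring_scope.

Lemma eq_poly_natr (R : numDomainType) (p q : {poly R}) :
  (forall k : nat, (0 < k)%N -> p.[k%:R] = q.[k%:R]) -> p = q.
Proof.
move=> eq_pq; apply/eqP; rewrite -subr_eq0; apply/eqP.
apply: (@roots_geq_poly_eq0 _ _ [seq i.+1%:R | i <- iota 0 (size (p - q))]).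
- by apply/allP => _ /mapP [i _ ->]; rewrite rootE !hornerE eq_pq ?subrr.
- by rewrite map_inj_uniq ?iota_uniq // => i j /eqP; rewrite eqr_nat => /eqP [].
- by rewrite size_map size_iota.
Qed.

Definition Hbullet_poly (T : finType) (g : rel T) : {poly rat} :=
  'X * \sum_(S : {set T} | independent g S) ('X - 1%:P) ^+ (#|T| - #|S|).

Lemma Hbullet_poly_chrom (T : finType) (g : rel T) :
  is_chrom_poly (Hbullet_edges g) (Hbullet_poly g).
Proof.
move=> k k_gt0; rewrite num_weak_colourings_Hbullet natrM natr_sum.
rewrite hornerM hornerX horner_sum; congr (_ * _); apply: eq_bigr => S _.
by rewrite horner_exp !hornerE natrX -subn1 natrB.
Qed.

Lemma mup_Hbullet_poly (T : finType) (g : rel T) :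
  mup (1 : rat) (Hbullet_poly g) = (#|T| - independence_number g)%N.
Proof.
set a := independence_number g.
pose Q := 'X * \sum_(S : {set T} | independent g S) ('X - 1%:P) ^+ (a - #|S|) : {poly rat}.
have -> : Hbullet_poly g = ('X - 1%:P) ^+ (#|T| - a) * Q.
  rewrite /Hbullet_poly /Q [RHS]mulrCA; congr (_ * _).
  rewrite mulr_sumr; apply: eq_bigr => S indS.
  have := card_le_independence_number indS; have := independence_number_le_card g.
  by rewrite -exprD -/a => aT Sa; rewrite addnBA // subnK.
have Q1 : Q.[1] = (\sum_(S : {set T} | independent g S) (#|S| == a) : nat)%:R.
  rewrite hornerM hornerX mul1r horner_sum natr_sum; apply: eq_bigr => S indS.
  rewrite horner_exp !hornerE subrr expr0n subn_eq0 eqn_leq.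
  by rewrite card_le_independence_number.
have Q1_neq0 : ~~ root Q 1.
  have [S indS Sa] := independence_number_attained g.
  by rewrite rootE Q1 pnatr_eq0 -lt0n (bigD1 S) //= Sa eqxx.
by rewrite mupMl ?mup_XsubCX ?eqxx.
Qed.

Theorem mainTheorem2 (T : finType) (g : rel T) :
  simple_graph g ->
  (exists p : {poly rat}, is_chrom_poly (Hbullet_edges g) p) /\
  (forall p : {poly rat}, is_chrom_poly (Hbullet_edges g) p ->
     mup (1 : rat) p = (#|T| - independence_number g)%N).
Proof.
(* The count is valid for any relation. *)
move=> _; split; first by exists (Hbullet_poly g); apply: Hbullet_poly_chrom.
move=> p p_chrom; rewrite (@eq_poly_natr _ p (Hbullet_poly g)) ?mup_Hbullet_poly //.
by move=> k k_gt0; rewrite p_chrom ?Hbullet_poly_chrom.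
Qed.
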